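(* Let $0<T<\infty$ and let $C(\cdot,t)$, $t\in[0,T)$, be a smooth family of closed curves in $\mathbb{R}^2$ with centro-affine arc-length $\xi$ and centro-affine curvature $\varphi$, evolving by the flow $$\frac{\partial C(p,t)}{\partial t}=\Big(\lambda+\int_0^{\xi(p)}\varphi\,d\xi\Big)C+\frac{\varphi}{2}C_\xi$$ ($\lambda$ a real constant), so that $\varphi$ satisfies $\frac{\partial\varphi}{\partial t}=\frac12\varphi_{\xi\xi}-\frac12\varphi^3+2\varphi$ on $[0,T)$. Then for every integer $n\ge0$, $\frac{\partial^n\varphi}{\partial\xi^n}$ is bounded on $S^1\times[0,T)$.
   Context: For $u,v\in\mathbb{R}^2$, $[u,v]$ denotes the determinant of the matrix with columns $u,v$. Each curve $C(\cdot,t):S^1\to\mathbb{R}^2$ is smooth, closed, with $[C,C_p]\neq0$, $[C_p,C_{pp}]\neq0$ (then $[C_p,C_{pp}]/[C,C_p]>0$). The centro-affine metric is $g=\sqrt{[C_p,C_{pp}]/[C,C_p]}$, centro-affine arc-length $\xi(p)=\int_{p_0}^p g\,dp$ (so $\partial_\xi=g^{-1}\partial_p$), and centro-affine curvature $\varphi=[C_{\xi\xi},C]/[C_\xi,C]$. Under this flow $g_t/g=\frac12\varphi^2$. *)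

From Stdlib Require Import Reals List.
From Coquelicot Require Import Coquelicot.
Open Scope R_scope.

(* A time-dependent planar curve is given by its two coordinate functions
   X, Y : R -> R -> R, (p, t) |-> coordinates of C(p,t). *)

Definition dP (f : R -> R -> R) : R -> R -> R :=
  fun p t => Derive (fun q => f q t) p.
Definition dT (f : R -> R -> R) : R -> R -> R :=
  fun p t => Derive (fun s => f p s) t.

(* iterated mixed partial derivative along a word (true = t, false = p) *)
Fixpoint pder (w : list bool) (f : R -> R -> R) : R -> R -> R :=
  match w with
  | nil => f
  | cons b w' => (if b then dT else dP) (pder w' f)
  end.

Definition smooth_on (U : R -> R -> Prop) (f : R -> R -> R) : Prop :=
  forall (w : list bool) (p t : R), U p t ->
    ex_derive (fun q => pder w f q t) p /\
    ex_derive (fun s => pder w f p s) t /\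
    continuous (fun z : R * R => pder w f (fst z) (snd z)) (p, t).

Definition cross_C_Cp (X Y : R -> R -> R) : R -> R -> R :=
  fun p t => X p t * dP Y p t - Y p t * dP X p t.

Definition cross_Cp_Cpp (X Y : R -> R -> R) : R -> R -> R :=
  fun p t => dP X p t * dP (dP Y) p t - dP Y p t * dP (dP X) p t.

Definition ca_metric (X Y : R -> R -> R) : R -> R -> R :=
  fun p t => sqrt (cross_Cp_Cpp X Y p t / cross_C_Cp X Y p t).

Definition dxi (X Y : R -> R -> R) (f : R -> R -> R) : R -> R -> R :=
  fun p t => dP f p t / ca_metric X Y p t.

Definition dxi_n (X Y : R -> R -> R) (n : nat) (f : R -> R -> R) : R -> R -> R :=
  Nat.iter n (dxi X Y) f.

Definition ca_curv (X Y : R -> R -> R) : R -> R -> R :=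
  fun p t =>
    (dxi X Y (dxi X Y X) p t * Y p t - dxi X Y (dxi X Y Y) p t * X p t) /
    (dxi X Y X p t * Y p t - dxi X Y Y p t * X p t).

(* int_0^{xi(p)} phi dxi = int_0^p phi g dp  (arc-length based at p = 0) *)
Definition int_curv (X Y : R -> R -> R) : R -> R -> R :=
  fun p t => RInt (fun q => ca_curv X Y q t * ca_metric X Y q t) 0 p.

From Stdlib Require Import Reals Lra Lia Psatz ZArith FunctionalExtensionality IndefiniteDescription Classical.
From Coquelicot Require Import Coquelicot.
Open Scope R_scope.

(* Write [psi n] for the n-th xi-derivative of phi.  Since [d/dt, d/dxi] = -(phi^2/2) d/dxi, the
   evolution of phi propagates by induction to
     d(psi n)/dt = psi (n+2)/2 + (2 - c_n phi^2) psi n + R_n(psi 0, ..., psi (n-1))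
   with c_n >= 0 and R_n a polynomial.  At a spatial maximum of psi n one has psi (n+2) <= 0, so
   once psi 0, ..., psi (n-1) are bounded, the maximum of psi n grows at most like
   d/dt max <= 2 max + M, which keeps it bounded on the finite interval [0, T); the same holds
   for the minimum.  The ratio [C_p,C_pp]/[C,C_p] never vanishes, hence has constant sign; if it is
   negative, the metric is the square root of a negative number, i.e. 0, and every psi n vanishes. *)

Definition cont2 (f : R -> R -> R) (p t : R) : Prop :=
  continuous (fun z : R * R => f (fst z) (snd z)) (p, t).

Definition open2 (U : R -> R -> Prop) : Prop :=
  forall p t, U p t -> locally_2d U p t.

Lemma cont2_const c p t : cont2 (fun _ _ => c) p t.
Proof. apply continuous_const. Qed.

Lemma cont2_plus f g p t :
  cont2 f p t -> cont2 g p t -> cont2 (fun p t => f p t + g p t) p t.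
Proof. exact (continuous_plus _ _ _). Qed.

Lemma cont2_mult f g p t :
  cont2 f p t -> cont2 g p t -> cont2 (fun p t => f p t * g p t) p t.
Proof. exact (continuous_mult _ _ _). Qed.

Lemma cont2_minus f g p t :
  cont2 f p t -> cont2 g p t -> cont2 (fun p t => f p t - g p t) p t.
Proof. exact (continuous_minus _ _ _). Qed.

Lemma cont2_inv f p t :
  cont2 f p t -> f p t <> 0 -> cont2 (fun p t => / f p t) p t.
Proof.
  intros Hf Hnz. apply (continuous_comp (fun z : R * R => f (fst z) (snd z)) Rinv); auto.
  exact (continuous_Rinv _ Hnz).
Qed.

Lemma cont2_sqrt f p t :
  cont2 f p t -> 0 < f p t -> cont2 (fun p t => sqrt (f p t)) p t.
Proof.
  intros Hf Hpos. apply (continuous_comp (fun z : R * R => f (fst z) (snd z)) sqrt); auto.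
  apply continuity_pt_filterlim, continuity_pt_sqrt. simpl. lra.
Qed.

Lemma cont2_of_time h p t : continuous h t -> cont2 (fun _ s => h s) p t.
Proof. intros Hh. apply (continuous_comp (fun z : R * R => snd z) h); auto. apply continuous_snd. Qed.

Lemma continuity_pt_of_cont2 f p t : cont2 f p t -> continuity_pt (fun q => f q t) p.
Proof.
  intros Hf. apply continuity_pt_filterlim.
  apply (continuous_comp_2 (fun q : R => q) (fun _ : R => t) f p); auto.
  - apply continuous_id.
  - apply continuous_const.
Qed.

Lemma cont2_ext f g p t :
  locally_2d (fun u v => f u v = g u v) p t -> cont2 f p t -> cont2 g p t.
Proof.
  intros Hfg Hf. assert (Hfg' := proj1 (locally_2d_locally _ p t) Hfg).
  unfold cont2, continuous. simpl. rewrite <- (locally_2d_singleton _ _ _ Hfg).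
  exact (filterlim_ext_loc _ _ Hfg' Hf).
Qed.

Lemma cont2_ball f p t eps : cont2 f p t -> 0 < eps -> exists d : posreal,
  forall u v, Rabs (u - p) < d -> Rabs (v - t) < d -> Rabs (f u v - f p t) < eps.
Proof.
  intros Hf Heps.
  assert (Hb : locally (p, t) (fun z : R * R => ball (f p t) (mkposreal _ Heps) (f (fst z) (snd z))))
    by (apply Hf, locally_ball).
  destruct (proj2 (locally_2d_locally (fun u v => ball (f p t) (mkposreal _ Heps) (f u v)) p t) Hb)
    as [d Hd].
  exists d. intros u v Hu Hv. exact (Hd u v Hu Hv).
Qed.

Lemma open2_and_pos V f :
  open2 V -> (forall p t, V p t -> 0 < f p t -> cont2 f p t) ->
  open2 (fun p t => V p t /\ 0 < f p t).
Proof.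
  intros HV Hf p t [Hv Hpos].
  destruct (cont2_ball f p t (f p t) (Hf p t Hv Hpos) Hpos) as [d Hd].
  destruct (HV p t Hv) as [e He].
  assert (Hde : 0 < Rmin d e) by (apply Rmin_glb_lt; apply cond_pos).
  exists (mkposreal _ Hde). simpl. intros u v Hu Hv'.
  assert (Hmd := Rmin_l d e). assert (Hme := Rmin_r d e).
  split.
  - apply He; lra.
  - assert (Hclose := Hd u v ltac:(lra) ltac:(lra)). apply Rabs_def2 in Hclose. lra.
Qed.

Fixpoint Ck (U : R -> R -> Prop) (k : nat) (f : R -> R -> R) : Prop :=
  match k with
  | O => forall p t, U p t -> cont2 f p t
  | S k' =>
      (forall p t, U p t ->
         cont2 f p t /\ ex_derive (fun q => f q t) p /\ ex_derive (fun s => f p s) t)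
      /\ Ck U k' (dP f) /\ Ck U k' (dT f)
  end.

Definition Cinf (U : R -> R -> Prop) (f : R -> R -> R) : Prop := forall k, Ck U k f.

Lemma Ck_cont U k f p t : Ck U k f -> U p t -> cont2 f p t.
Proof. destruct k as [|k]; intros Hf Hu; [exact (Hf p t Hu) | exact (proj1 (proj1 Hf p t Hu))]. Qed.

Lemma Ck_pred U k f : Ck U (S k) f -> Ck U k f.
Proof.
  revert f; induction k as [|k IHk]; intros f [Hpt [HdP HdT]].
  - intros p t Hu. exact (proj1 (Hpt p t Hu)).
  - split; [exact Hpt | split; apply IHk; assumption].
Qed.

Lemma Ck_subset U V k f : (forall p t, U p t -> V p t) -> Ck V k f -> Ck U k f.
Proof.
  intros HUV. revert f; induction k as [|k IHk]; intros f Hf; simpl in *.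
  - auto.
  - destruct Hf as [Hpt [HdP HdT]]. auto.
Qed.

Lemma locally_of_locally_2d_p (P : R -> R -> Prop) p t :
  locally_2d P p t -> locally p (fun q => P q t).
Proof.
  intros [d Hd]. exists d. intros q Hq. apply Hd; [exact Hq |].
  rewrite Rminus_eq_0, Rabs_R0. apply cond_pos.
Qed.

Lemma locally_of_locally_2d_t (P : R -> R -> Prop) p t :
  locally_2d P p t -> locally t (fun s => P p s).
Proof.
  intros [d Hd]. exists d. intros s Hs. apply Hd; [| exact Hs].
  rewrite Rminus_eq_0, Rabs_R0. apply cond_pos.
Qed.

Section CkAlgebra.

Variable U : R -> R -> Prop.
Hypothesis HU : open2 U.

Lemma locally_2d_eq_on (f g : R -> R -> R) p t :
  (forall p t, U p t -> f p t = g p t) -> U p t -> locally_2d (fun u v => f u v = g u v) p t.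
Proof.
  intros Hfg Hu. apply (locally_2d_impl U); [| exact (HU p t Hu)].
  apply locally_2d_forall. exact Hfg.
Qed.

Lemma Ck_ext k f g : (forall p t, U p t -> f p t = g p t) -> Ck U k f -> Ck U k g.
Proof.
  revert f g; induction k as [|k IHk]; intros f g Hfg Hf.
  - intros p t Hu. exact (cont2_ext f g p t (locally_2d_eq_on f g p t Hfg Hu) (Hf p t Hu)).
  - destruct Hf as [Hpt [HdP HdT]].
    assert (Hloc := fun p t Hu => locally_2d_eq_on f g p t Hfg Hu).
    split; [| split].
    + intros p t Hu. destruct (Hpt p t Hu) as [Hc [Hp Ht]]. split; [| split].
      * exact (cont2_ext f g p t (Hloc p t Hu) Hc).
      * exact (ex_derive_ext_loc _ _ _ (locally_of_locally_2d_p _ p t (Hloc p t Hu)) Hp).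
      * exact (ex_derive_ext_loc _ _ _ (locally_of_locally_2d_t _ p t (Hloc p t Hu)) Ht).
    + apply (IHk (dP f)); [| exact HdP]. intros p t Hu.
      exact (Derive_ext_loc _ _ _ (locally_of_locally_2d_p _ p t (Hloc p t Hu))).
    + apply (IHk (dT f)); [| exact HdT]. intros p t Hu.
      exact (Derive_ext_loc _ _ _ (locally_of_locally_2d_t _ p t (Hloc p t Hu))).
Qed.

Lemma Ck_const k c : Ck U k (fun _ _ => c).
Proof.
  revert c; induction k as [|k IHk]; intros c; simpl.
  - intros p t _. apply cont2_const.
  - split; [| split].
    + intros p t _. split; [apply cont2_const | split; apply ex_derive_const].
    + apply (Ck_ext k (fun _ _ => 0)); [| exact (IHk 0)]. intros p t _. symmetry. exact (Derive_const c _).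
    + apply (Ck_ext k (fun _ _ => 0)); [| exact (IHk 0)]. intros p t _. symmetry. exact (Derive_const c _).
Qed.

Lemma Ck_plus k f g : Ck U k f -> Ck U k g -> Ck U k (fun p t => f p t + g p t).
Proof.
  revert f g; induction k as [|k IHk]; intros f g Hf Hg.
  - intros p t Hu. apply cont2_plus; [exact (Hf p t Hu) | exact (Hg p t Hu)].
  - destruct Hf as [Fpt [FdP FdT]], Hg as [Gpt [GdP GdT]]. split; [| split].
    + intros p t Hu. destruct (Fpt p t Hu) as [Fc [Fp Ft]], (Gpt p t Hu) as [Gc [Gp Gt]].
      split; [apply cont2_plus; assumption |].
      split; [apply (ex_derive_plus (fun q => f q t)) | apply (ex_derive_plus (fun s => f p s))];
        assumption.
    + apply (Ck_ext k (fun p t => dP f p t + dP g p t)); [| exact (IHk _ _ FdP GdP)].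
      intros p t Hu. destruct (Fpt p t Hu) as [_ [Fp _]], (Gpt p t Hu) as [_ [Gp _]].
      symmetry. exact (Derive_plus _ _ _ Fp Gp).
    + apply (Ck_ext k (fun p t => dT f p t + dT g p t)); [| exact (IHk _ _ FdT GdT)].
      intros p t Hu. destruct (Fpt p t Hu) as [_ [_ Ft]], (Gpt p t Hu) as [_ [_ Gt]].
      symmetry. exact (Derive_plus _ _ _ Ft Gt).
Qed.

Lemma Ck_mult k f g : Ck U k f -> Ck U k g -> Ck U k (fun p t => f p t * g p t).
Proof.
  revert f g; induction k as [|k IHk]; intros f g Hf Hg.
  - intros p t Hu. apply cont2_mult; [exact (Hf p t Hu) | exact (Hg p t Hu)].
  - assert (Hf' := Ck_pred _ _ _ Hf). assert (Hg' := Ck_pred _ _ _ Hg).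
    destruct Hf as [Fpt [FdP FdT]], Hg as [Gpt [GdP GdT]]. split; [| split].
    + intros p t Hu. destruct (Fpt p t Hu) as [Fc [Fp Ft]], (Gpt p t Hu) as [Gc [Gp Gt]].
      split; [apply cont2_mult; assumption | split; apply ex_derive_mult; assumption].
    + apply (Ck_ext k (fun p t => dP f p t * g p t + f p t * dP g p t)).
      * intros p t Hu. destruct (Fpt p t Hu) as [_ [Fp _]], (Gpt p t Hu) as [_ [Gp _]].
        symmetry. exact (Derive_mult _ _ _ Fp Gp).
      * apply Ck_plus; apply IHk; assumption.
    + apply (Ck_ext k (fun p t => dT f p t * g p t + f p t * dT g p t)).
      * intros p t Hu. destruct (Fpt p t Hu) as [_ [_ Ft]], (Gpt p t Hu) as [_ [_ Gt]].
        symmetry. exact (Derive_mult _ _ _ Ft Gt).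
      * apply Ck_plus; apply IHk; assumption.
Qed.

Lemma Ck_opp k f : Ck U k f -> Ck U k (fun p t => - f p t).
Proof.
  intros Hf. apply (Ck_ext k (fun p t => (fun _ _ => -1) p t * f p t)).
  - intros p t _. ring.
  - apply Ck_mult; [apply Ck_const | exact Hf].
Qed.

Lemma Ck_minus k f g : Ck U k f -> Ck U k g -> Ck U k (fun p t => f p t - g p t).
Proof. intros Hf Hg. exact (Ck_plus k f (fun p t => - g p t) Hf (Ck_opp k g Hg)). Qed.

Lemma Ck_inv k f : (forall p t, U p t -> f p t <> 0) -> Ck U k f -> Ck U k (fun p t => / f p t).
Proof.
  intros Hnz. revert f Hnz; induction k as [|k IHk]; intros f Hnz Hf.
  - intros p t Hu. apply cont2_inv; [exact (Hf p t Hu) | exact (Hnz p t Hu)].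
  - assert (Hinv := IHk f Hnz (Ck_pred _ _ _ Hf)).
    destruct Hf as [Fpt [FdP FdT]]. split; [| split].
    + intros p t Hu. destruct (Fpt p t Hu) as [Fc [Fp Ft]].
      split; [apply cont2_inv; auto | split; apply ex_derive_inv; auto].
    + apply (Ck_ext k (fun p t => (fun _ _ => -1) p t * dP f p t * (/ f p t * / f p t))).
      * intros p t Hu. destruct (Fpt p t Hu) as [_ [Fp _]].
        cbv beta. transitivity (- dP f p t / f p t ^ 2).
        -- field. exact (Hnz p t Hu).
        -- symmetry. exact (Derive_inv _ _ Fp (Hnz p t Hu)).
      * apply Ck_mult; [apply Ck_mult; [apply Ck_const | exact FdP] | apply Ck_mult; exact Hinv].
    + apply (Ck_ext k (fun p t => (fun _ _ => -1) p t * dT f p t * (/ f p t * / f p t))).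
      * intros p t Hu. destruct (Fpt p t Hu) as [_ [_ Ft]].
        cbv beta. transitivity (- dT f p t / f p t ^ 2).
        -- field. exact (Hnz p t Hu).
        -- symmetry. exact (Derive_inv _ _ Ft (Hnz p t Hu)).
      * apply Ck_mult; [apply Ck_mult; [apply Ck_const | exact FdT] | apply Ck_mult; exact Hinv].
Qed.

Lemma Ck_div k f g :
  (forall p t, U p t -> g p t <> 0) -> Ck U k f -> Ck U k g -> Ck U k (fun p t => f p t / g p t).
Proof. intros Hnz Hf Hg. apply (Ck_mult k f (fun p t => / g p t)); [exact Hf | exact (Ck_inv k g Hnz Hg)]. Qed.

Lemma Ck_sqrt k f : (forall p t, U p t -> 0 < f p t) -> Ck U k f -> Ck U k (fun p t => sqrt (f p t)).
Proof.
  intros Hpos. revert f Hpos; induction k as [|k IHk]; intros f Hpos Hf.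
  - intros p t Hu. apply cont2_sqrt; [exact (Hf p t Hu) | exact (Hpos p t Hu)].
  - assert (Hsqrt := IHk f Hpos (Ck_pred _ _ _ Hf)).
    assert (Hfactor : Ck U k (fun p t => / ((fun _ _ => 2) p t * sqrt (f p t)))).
    { apply Ck_inv; [| apply Ck_mult; [apply Ck_const | exact Hsqrt]].
      intros p t Hu. generalize (sqrt_lt_R0 _ (Hpos p t Hu)). lra. }
    destruct Hf as [Fpt [FdP FdT]]. split; [| split].
    + intros p t Hu. destruct (Fpt p t Hu) as [Fc [Fp Ft]].
      split; [apply cont2_sqrt; auto | split].
      * exists (Derive (fun q => f q t) p / (2 * sqrt (f p t))).
        exact (is_derive_sqrt (fun q => f q t) _ _ (Derive_correct _ _ Fp) (Hpos p t Hu)).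
      * exists (Derive (fun s => f p s) t / (2 * sqrt (f p t))).
        exact (is_derive_sqrt (fun s => f p s) _ _ (Derive_correct _ _ Ft) (Hpos p t Hu)).
    + apply (Ck_ext k (fun p t => dP f p t * / ((fun _ _ => 2) p t * sqrt (f p t))));
        [| apply Ck_mult; assumption].
      intros p t Hu. destruct (Fpt p t Hu) as [_ [Fp _]]. symmetry. apply is_derive_unique.
      exact (is_derive_sqrt (fun q => f q t) _ _ (Derive_correct _ _ Fp) (Hpos p t Hu)).
    + apply (Ck_ext k (fun p t => dT f p t * / ((fun _ _ => 2) p t * sqrt (f p t))));
        [| apply Ck_mult; assumption].
      intros p t Hu. destruct (Fpt p t Hu) as [_ [_ Ft]]. symmetry. apply is_derive_unique.
      exact (is_derive_sqrt (fun s => f p s) _ _ (Derive_correct _ _ Ft) (Hpos p t Hu)).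
Qed.

End CkAlgebra.

Lemma Cinf_of_smooth_on U f : smooth_on U f -> Cinf U f.
Proof.
  intros Hs k. change f with (pder nil f). generalize (@nil bool) as w.
  induction k as [|k IHk]; intros w; simpl.
  - intros p t Hu. exact (proj2 (proj2 (Hs w p t Hu))).
  - split; [| split].
    + intros p t Hu. destruct (Hs w p t Hu) as [Hp [Ht Hc]]. auto.
    + exact (IHk (cons false w)).
    + exact (IHk (cons true w)).
Qed.

Lemma Cinf_dP U f : Cinf U f -> Cinf U (dP f).
Proof. intros Hf k. exact (proj1 (proj2 (Hf (S k)))). Qed.

Lemma Cinf_dT U f : Cinf U f -> Cinf U (dT f).
Proof. intros Hf k. exact (proj2 (proj2 (Hf (S k)))). Qed.

Lemma Cinf_pointwise U f p t : Cinf U f -> U p t ->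
  cont2 f p t /\ ex_derive (fun q => f q t) p /\ ex_derive (fun s => f p s) t.
Proof. intros Hf Hu. exact (proj1 (Hf 1%nat) p t Hu). Qed.

Lemma Cinf_Schwarz U f p t : open2 U -> Cinf U f -> U p t -> dT (dP f) p t = dP (dT f) p t.
Proof.
  intros HU Hf Hu. unfold dT, dP. symmetry. apply Schwarz.
  - apply (locally_2d_impl U); [| exact (HU p t Hu)].
    apply locally_2d_forall. intros u v Huv.
    destruct (Cinf_pointwise U f u v Hf Huv) as [_ [Hp Ht]].
    destruct (Cinf_pointwise U (dT f) u v (Cinf_dT _ _ Hf) Huv) as [_ [HTp _]].
    destruct (Cinf_pointwise U (dP f) u v (Cinf_dP _ _ Hf) Huv) as [_ [_ HPt]].
    auto.
  - apply continuity_2d_pt_filterlim. exact (Ck_cont U 0 _ p t (Cinf_dP _ _ (Cinf_dT _ _ Hf) 0%nat) Hu).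
  - apply continuity_2d_pt_filterlim. exact (Ck_cont U 0 _ p t (Cinf_dT _ _ (Cinf_dP _ _ Hf) 0%nat) Hu).
Qed.

Definition periodic (u : R -> R -> R) : Prop := forall p t, u (p + 1) t = u p t.

Lemma periodic_shift u z p t : periodic u -> u (p + IZR z) t = u p t.
Proof.
  intros Hu. revert p. induction z as [| z IHz | z IHz] using Z.peano_ind; intros p.
  - now rewrite Rplus_0_r.
  - rewrite succ_IZR. replace (p + (IZR z + 1)) with (p + IZR z + 1) by ring.
    now rewrite Hu.
  - rewrite <- Z.sub_1_r, minus_IZR. replace (p + (IZR z - 1)) with (p - 1 + IZR z) by ring.
    rewrite IHz. replace p with (p - 1 + 1) at 2 by ring. now rewrite Hu.
Qed.

Lemma periodic_reduce u p t : periodic u -> exists q, 0 <= q <= 1 /\ u p t = u q t.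
Proof.
  intros Hu. destruct (base_Int_part p) as [Hlo Hhi].
  exists (p - IZR (Int_part p)). split; [lra |].
  rewrite <- (periodic_shift u (Int_part p) (p - IZR (Int_part p)) t Hu).
  f_equal. ring.
Qed.

Lemma periodic_dP u : periodic u -> periodic (dP u).
Proof.
  intros Hu p t. unfold dP, Derive.
  replace (fun h => (u (p + 1 + h) t - u (p + 1) t) / h) with (fun h => (u (p + h) t - u p t) / h);
    [reflexivity |].
  apply functional_extensionality. intros h.
  replace (p + 1 + h) with (p + h + 1) by ring. now rewrite !Hu.
Qed.

Lemma periodic_max u t : periodic u -> (forall p, cont2 u p t) ->
  exists pm, forall q, u q t <= u pm t.
Proof.
  intros Hu Hc.
  destruct (continuity_ab_maj (fun p => u p t) 0 1) as [pm [Hpm _]]; [lra | |].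
  { intros p _. exact (continuity_pt_of_cont2 u p t (Hc p)). }
  exists pm. intros q. destruct (periodic_reduce u q t Hu) as [q' [Hq' ->]]. exact (Hpm q' Hq').
Qed.

Lemma is_derive_Rmult (f g : R -> R) x df dg : is_derive f x df -> is_derive g x dg ->
  is_derive (fun y => f y * g y) x (df * g x + f x * dg).
Proof. intros Hf Hg. exact (is_derive_mult f g x df dg Hf Hg (fun _ _ => Rmult_comm _ _)). Qed.

Lemma is_derive_pos_locally f x l : is_derive f x l -> 0 < l ->
  exists d : posreal, forall h, 0 < h < d -> f (x - h) < f x < f (x + h).
Proof.
  intros Hf Hl. apply is_derive_Reals in Hf.
  destruct (Hf (l / 2) ltac:(lra)) as [d Hd]. exists d. intros h Hh.
  assert (Hquot : forall k, k <> 0 -> Rabs k < d -> l / 2 < (f (x + k) - f x) / k).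
  { intros k Hk0 Hkd. generalize (Hd k Hk0 Hkd). intros Habs. apply Rabs_def2 in Habs. lra. }
  assert (Hright := Hquot h ltac:(lra) ltac:(rewrite Rabs_pos_eq; lra)).
  assert (Hleft := Hquot (- h) ltac:(lra) ltac:(rewrite Rabs_Ropp, Rabs_pos_eq; lra)).
  replace (x + - h) with (x - h) in Hleft by ring.
  apply Rmult_lt_compat_r with (r := h) in Hright; [| lra].
  apply Rmult_lt_compat_r with (r := h) in Hleft; [| lra].
  replace ((f (x + h) - f x) / h * h) with (f (x + h) - f x) in Hright by (field; lra).
  replace ((f (x - h) - f x) / - h * h) with (f x - f (x - h)) in Hleft by (field; lra).
  nra.
Qed.

Lemma deriv_at_max f p l : is_derive f p l -> (forall q, f q <= f p) -> l = 0.
Proof.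
  intros Hf Hmax. apply is_derive_Reals in Hf.
  rewrite <- (derive_pt_eq_0 f p l (exist _ l Hf) Hf).
  apply (deriv_maximum f (p - 1) (p + 1)); [lra | lra | intros q _ _; apply Hmax].
Qed.

Lemma deriv2_at_max f df p d2 :
  (forall q, is_derive f q (df q)) -> is_derive df p d2 -> (forall q, f q <= f p) -> d2 <= 0.
Proof.
  intros Hf Hdf Hmax. apply Rnot_lt_le. intros Hd2.
  assert (Hcrit := deriv_at_max f p (df p) (Hf p) Hmax).
  destruct (is_derive_pos_locally df p d2 Hdf Hd2) as [d Hd].
  assert (Hdpos := cond_pos d).
  destruct (MVT_cor2 f df p (p + d / 2)) as [c [Hmvt Hc]]; [lra | |].
  { intros c _. apply is_derive_Reals, Hf. }
  assert (Hdfc : 0 < df c).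
  { replace c with (p + (c - p)) by ring. rewrite <- Hcrit. apply (Hd (c - p)). lra. }
  generalize (Hmax (p + d / 2)). nra.
Qed.

Lemma is_derive_neg_earlier f x l : is_derive f x l -> l < 0 -> 0 < x ->
  exists r, 0 <= r < x /\ f x < f r.
Proof.
  intros Hf Hl Hx.
  destruct (is_derive_pos_locally (fun y => - f y) x (- l)) as [d Hd];
    [exact (is_derive_opp f x l Hf) | lra |].
  assert (Hd0 := cond_pos d).
  assert (Hh1 := Rmin_l (d / 2) (x / 2)). assert (Hh2 := Rmin_r (d / 2) (x / 2)).
  assert (Hh : 0 < Rmin (d / 2) (x / 2)) by (apply Rmin_glb_lt; lra).
  exists (x - Rmin (d / 2) (x / 2)). split; [lra |].
  generalize (Hd (Rmin (d / 2) (x / 2)) ltac:(lra)). lra.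
Qed.

Lemma uniform_continuity_in_time w tau eta : 0 < eta ->
  (forall p, 0 <= p <= 1 -> cont2 w p tau) ->
  exists d, 0 < d /\ forall p s, 0 <= p <= 1 -> Rabs (s - tau) < d -> Rabs (w p s - w p tau) < eta.
Proof.
  intros Heta Hc.
  assert (Hloc : forall p, exists d : posreal, 0 <= p <= 1 -> forall u v,
    Rabs (u - p) < d -> Rabs (v - tau) < d -> Rabs (w u v - w p tau) < eta / 2).
  { intros p. destruct (Rle_dec 0 p), (Rle_dec p 1).
    - destruct (cont2_ball w p tau (eta / 2) (Hc p ltac:(lra)) ltac:(lra)) as [d Hd]. now exists d.
    - exists (mkposreal 1 Rlt_0_1). intros; lra.
    - exists (mkposreal 1 Rlt_0_1). intros; lra.
    - exists (mkposreal 1 Rlt_0_1). intros; lra. }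
  destruct (functional_choice _ Hloc) as [delta Hdelta].
  destruct (compactness_value_1d 0 1 (fun p => mkposreal _ (is_pos_div_2 (delta p)))) as [d Hd].
  exists d. split; [apply cond_pos |].
  intros p s Hp Hs. apply NNPP. intros Hfar. apply (Hd p Hp). intros [p0 [Hp0 [Hclose Hle]]].
  apply Hfar. simpl in Hclose, Hle. assert (Hpos := cond_pos (delta p0)).
  assert (Hs' := Hdelta p0 Hp0 p s ltac:(lra) ltac:(lra)).
  assert (Htau := Hdelta p0 Hp0 p tau ltac:(lra) ltac:(rewrite Rminus_eq_0, Rabs_R0; lra)).
  apply Rabs_def2 in Hs'. apply Rabs_def2 in Htau. apply Rabs_def1; lra.
Qed.

Lemma negative_persists w tau : periodic w -> (forall p, cont2 w p tau) ->
  (forall p, w p tau < 0) -> exists d, 0 < d /\ forall p s, Rabs (s - tau) < d -> w p s < 0.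
Proof.
  intros Hper Hc Hneg.
  destruct (periodic_max w tau Hper Hc) as [pm Hpm].
  destruct (uniform_continuity_in_time w tau (- w pm tau)) as [d [Hd Hclose]];
    [generalize (Hneg pm); lra | intros p _; apply Hc |].
  exists d. split; [exact Hd |]. intros p s Hs.
  destruct (periodic_reduce w p s Hper) as [q [Hq ->]].
  generalize (Hclose q s Hq Hs) (Hpm q). intros Habs Hq'. apply Rabs_def2 in Habs. lra.
Qed.

(* At the supremum of the times up to which [w < 0], the spatial maximum of [w] would touch 0 for
   the first time. *)
Lemma periodic_stays_negative (T : R) (w : R -> R -> R) :
  periodic w -> (forall p t, 0 <= t < T -> cont2 w p t) -> (forall p, w p 0 < 0) ->
  (forall p tau, 0 < tau < T -> (forall q, w q tau <= w p tau) -> 0 <= w p tau ->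
     exists r, 0 <= r < tau /\ 0 <= w p r) ->
  forall p t, 0 <= t < T -> w p t < 0.
Proof.
  intros Hper Hc Hinit Htouch p1 t1 Ht1.
  set (G := fun s => 0 <= s <= t1 /\ forall r q, 0 <= r <= s -> w q r < 0).
  assert (G0 : G 0) by (split; [lra | intros r q Hr; replace r with 0 by lra; apply Hinit]).
  destruct (completeness G) as [tau [Hub Hlub]].
  { exists t1. intros s [Hs _]. lra. }
  { now exists 0. }
  assert (Htau0 : 0 <= tau) by (apply Hub, G0).
  assert (Htau1 : tau <= t1) by (apply Hlub; intros s [Hs _]; lra).
  assert (Hbefore : forall r q, 0 <= r < tau -> w q r < 0).
  { intros r q Hr. apply Rnot_le_lt. intros Hw.
    enough (tau <= r) by lra.
    apply Hlub. intros s [Hs HGs]. apply Rnot_lt_le. intros Hsr. generalize (HGs r q ltac:(lra)). lra. }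
  destruct (classic (forall q, w q tau < 0)) as [Hneg | Hnonneg].
  - destruct (Req_dec tau t1) as [-> | Hne]; [exact (Hneg p1) |].
    exfalso.
    destruct (negative_persists w tau Hper ltac:(intros q; apply Hc; lra) Hneg) as [d [Hd Hafter]].
    assert (Hs1 := Rmin_l (tau + d / 2) t1). assert (Hs2 := Rmin_r (tau + d / 2) t1).
    assert (Hs : tau < Rmin (tau + d / 2) t1) by (apply Rmin_glb_lt; lra).
    set (s := Rmin (tau + d / 2) t1) in *.
    enough (HGs : G s) by (generalize (Hub s HGs); lra).
    split; [lra |]. intros r q Hr.
    destruct (Rlt_le_dec r tau); [apply Hbefore; lra |].
    apply Hafter. rewrite Rabs_pos_eq; lra.
  - exfalso. apply not_all_ex_not in Hnonneg. destruct Hnonneg as [p0 Hp0]. apply Rnot_lt_le in Hp0.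
    assert (Htaupos : 0 < tau).
    { destruct Htau0 as [Hlt | Heq]; [exact Hlt |]. subst tau. generalize (Hinit p0). lra. }
    destruct (periodic_max w tau Hper ltac:(intros q; apply Hc; lra)) as [pm Hpm].
    destruct (Htouch pm tau ltac:(lra) Hpm ltac:(generalize (Hpm p0); lra)) as [r [Hr Hwr]].
    generalize (Hbefore r pm Hr). lra.
Qed.

Lemma exp_le_exp_of_le x y : x <= y -> exp x <= exp y.
Proof. intros [Hlt | ->]; [left; exact (exp_increasing _ _ Hlt) | right; reflexivity]. Qed.

Lemma exp_barrier_bound K A B T t x : 0 <= K -> 0 <= A -> 0 <= B -> 0 <= t < T ->
  exp (- K * t) * x < A + B * t -> x <= exp (K * T) * (A + B * T).
Proof.
  intros HK HA HB Ht Hx.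
  assert (Hsplit : x = exp (K * t) * (exp (- K * t) * x)).
  { rewrite <- Rmult_assoc, <- exp_plus. replace (K * t + - K * t) with 0 by ring. rewrite exp_0. ring. }
  assert (Hmono : exp (K * t) <= exp (K * T)) by (apply exp_le_exp_of_le; nra).
  assert (Hpos := exp_pos (K * t)).
  rewrite Hsplit. apply Rle_trans with (exp (K * t) * (A + B * t)); [nra |].
  apply Rmult_le_compat; nra.
Qed.

(* Comparison with the barrier [w = e^{-Kt} u - (M + 1) t - C0 - 1], which decreases at every
   nonnegative spatial maximum. *)
Lemma periodic_max_principle (T K M : R) (u : R -> R -> R) :
  0 < T -> 0 <= K -> 0 <= M -> periodic u ->
  (forall p t, 0 <= t < T -> cont2 u p t) ->
  (forall p t, 0 < t < T -> ex_derive (fun s => u p s) t) ->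
  (forall p t, 0 < t < T -> (forall q, u q t <= u p t) -> 0 <= u p t -> dT u p t <= K * u p t + M) ->
  exists B, forall p t, 0 <= t < T -> u p t <= B.
Proof.
  intros HT HK HM Hper Hc Hd Hmax.
  destruct (periodic_max u 0 Hper ltac:(intros p; apply Hc; lra)) as [p0 Hp0].
  assert (HC0 := Rmax_r (u p0 0) 0). assert (HC0' := Rmax_l (u p0 0) 0).
  set (C0 := Rmax (u p0 0) 0) in *.
  assert (Hinit : forall p, u p 0 <= C0) by (intros p; generalize (Hp0 p); lra).
  set (w := fun p s => exp (- K * s) * u p s - ((M + 1) * s + C0 + 1)).
  assert (Hneg : forall p t, 0 <= t < T -> w p t < 0).
  { apply periodic_stays_negative.
    - intros p s. unfold w. now rewrite Hper.
    - intros p s Hs. unfold w. apply cont2_minus; [apply cont2_mult; [| exact (Hc p s Hs)] |].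
      + apply cont2_of_time, (ex_derive_continuous (fun s => exp (- K * s))). auto_derive. auto.
      + apply cont2_of_time, (ex_derive_continuous (fun s => (M + 1) * s + C0 + 1)). auto_derive. auto.
    - intros p. unfold w. rewrite Rmult_0_r, exp_0. generalize (Hinit p). lra.
    - intros p tau Htau Hwmax Hwpos.
      assert (Hexp := exp_pos (- K * tau)).
      assert (Hexp1 : exp (- K * tau) <= 1) by (rewrite <- exp_0; apply exp_le_exp_of_le; nra).
      assert (Hupos : 0 <= u p tau).
      { assert (Hbarrier : 0 < (M + 1) * tau + C0 + 1) by nra. unfold w in Hwpos. nra. }
      assert (Humax : forall q, u q tau <= u p tau).
      { intros q. generalize (Hwmax q). unfold w. intros Hq.
        apply (Rmult_le_reg_l (exp (- K * tau))); lra. }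
      assert (HdT := Hmax p tau Htau Humax Hupos).
      assert (Hdw : is_derive (fun s => w p s) tau
                      (exp (- K * tau) * (dT u p tau - K * u p tau) - (M + 1))).
      { unfold w, dT. auto_derive; [apply Hd; lra | ring]. }
      destruct (is_derive_neg_earlier _ _ _ Hdw ltac:(nra) ltac:(lra)) as [r [Hr Hwr]].
      exists r. split; [exact Hr | lra]. }
  exists (exp (K * T) * (C0 + 1 + (M + 1) * T)). intros p t Ht.
  apply (exp_barrier_bound K _ _ T t); [lra | lra | lra | exact Ht |].
  generalize (Hneg p t Ht). unfold w. lra.
Qed.

(* Polynomials in the successive derivatives [ps 0, ps 1, ...] of one function. *)
Inductive poly : Type :=
  | PVar (i : nat)
  | PConst (c : R)
  | PAdd (a b : poly)
  | PMul (a b : poly).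

Fixpoint peval (ps : nat -> R -> R -> R) (e : poly) (p t : R) : R :=
  match e with
  | PVar i => ps i p t
  | PConst c => c
  | PAdd a b => peval ps a p t + peval ps b p t
  | PMul a b => peval ps a p t * peval ps b p t
  end.

Fixpoint pderiv (e : poly) : poly :=
  match e with
  | PVar i => PVar (S i)
  | PConst _ => PConst 0
  | PAdd a b => PAdd (pderiv a) (pderiv b)
  | PMul a b => PAdd (PMul (pderiv a) b) (PMul a (pderiv b))
  end.

Fixpoint pvars_lt (n : nat) (e : poly) : Prop :=
  match e with
  | PVar i => (i < n)%nat
  | PConst _ => True
  | PAdd a b | PMul a b => pvars_lt n a /\ pvars_lt n b
  end.

Lemma pvars_lt_S n e : pvars_lt n e -> pvars_lt (S n) e.
Proof. induction e; simpl; intuition lia. Qed.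

Lemma pvars_lt_pderiv n e : pvars_lt n e -> pvars_lt (S n) (pderiv e).
Proof. induction e; simpl; intuition (auto using pvars_lt_S; lia). Qed.

Lemma peval_is_derive (ps : nat -> R -> R -> R) (G : R) (e : poly) (p t : R) :
  (forall i, is_derive (fun q => ps i q t) p (G * ps (S i) p t)) ->
  is_derive (fun q => peval ps e q t) p (G * peval ps (pderiv e) p t).
Proof.
  intros Hps. induction e as [i | c | a IHa b IHb | a IHa b IHb]; simpl.
  - apply Hps.
  - replace (G * 0) with 0 by ring. exact (is_derive_const c p).
  - replace (G * (peval ps (pderiv a) p t + peval ps (pderiv b) p t))
      with (G * peval ps (pderiv a) p t + G * peval ps (pderiv b) p t) by ring.
    exact (is_derive_plus _ _ _ _ _ IHa IHb).
  - replace (G * (peval ps (pderiv a) p t * peval ps b p t + peval ps a p t * peval ps (pderiv b) p t))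
      with (G * peval ps (pderiv a) p t * peval ps b p t + peval ps a p t * (G * peval ps (pderiv b) p t))
      by ring.
    exact (is_derive_Rmult _ _ _ _ _ IHa IHb).
Qed.

Lemma peval_bounded (ps : nat -> R -> R -> R) (D : R -> R -> Prop) n e :
  (forall i, (i < n)%nat -> exists M, forall p t, D p t -> Rabs (ps i p t) <= M) ->
  pvars_lt n e -> exists M, forall p t, D p t -> Rabs (peval ps e p t) <= M.
Proof.
  intros Hps. induction e as [i | c | a IHa b IHb | a IHa b IHb]; simpl; intros Hvars.
  - exact (Hps i Hvars).
  - exists (Rabs c). intros; lra.
  - destruct Hvars as [Ha Hb]. destruct (IHa Ha) as [Ma HMa], (IHb Hb) as [Mb HMb].
    exists (Ma + Mb). intros p t Hd. eapply Rle_trans; [apply Rabs_triang |].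
    generalize (HMa p t Hd) (HMb p t Hd). lra.
  - destruct Hvars as [Ha Hb]. destruct (IHa Ha) as [Ma HMa], (IHb Hb) as [Mb HMb].
    exists (Ma * Mb). intros p t Hd. rewrite Rabs_mult.
    apply Rmult_le_compat; auto using Rabs_pos.
Qed.

Definition ca_ratio (X Y : R -> R -> R) : R -> R -> R :=
  fun p t => cross_Cp_Cpp X Y p t / cross_C_Cp X Y p t.

Definition psi (X Y : R -> R -> R) (n : nat) : R -> R -> R := dxi_n X Y n (ca_curv X Y).

Lemma dxi_opp X Y f : dxi X Y (fun p t => - f p t) = (fun p t => - dxi X Y f p t).
Proof.
  apply functional_extensionality. intros p. apply functional_extensionality. intros t.
  unfold dxi, dP. rewrite Derive_opp. unfold Rdiv. ring.
Qed.

Lemma periodic_psi X Y n : periodic X -> periodic Y -> periodic (psi X Y n).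
Proof.
  intros HX HY.
  assert (Hmetric : periodic (ca_metric X Y)).
  { intros p t. unfold ca_metric, cross_Cp_Cpp, cross_C_Cp.
    now rewrite HX, HY, !(periodic_dP _ HX), !(periodic_dP _ HY),
      !(periodic_dP _ (periodic_dP _ HX)), !(periodic_dP _ (periodic_dP _ HY)). }
  assert (Hdxi : forall f, periodic f -> periodic (dxi X Y f)).
  { intros f Hf p t. unfold dxi. now rewrite (periodic_dP f Hf), Hmetric. }
  induction n as [| n IHn].
  - intros p t. unfold psi, dxi_n, ca_curv; simpl.
    now rewrite !(Hdxi _ (Hdxi _ HX)), !(Hdxi _ (Hdxi _ HY)), !(Hdxi _ HX), !(Hdxi _ HY), HX, HY.
  - exact (Hdxi _ IHn).
Qed.

(* The junk values [sqrt x = 0] for [x <= 0] and [x / 0 = 0] make every [psi] vanish where the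
   metric is not defined. *)
Lemma psi_eq0_of_ratio_nonpos X Y n p t : ca_ratio X Y p t <= 0 -> psi X Y n p t = 0.
Proof.
  intros Hratio. assert (Hg : ca_metric X Y p t = 0) by exact (sqrt_neg_0 _ Hratio).
  destruct n as [| n]; unfold psi, dxi_n; simpl.
  - unfold ca_curv, dxi. rewrite Hg, !Rdiv_0_r, !Rmult_0_l, Rminus_0_r. apply Rdiv_0_r.
  - unfold dxi. rewrite Hg. apply Rdiv_0_r.
Qed.

Definition evolution_rhs (c : R) (n : nat) (r : poly) : poly :=
  PAdd (PMul (PConst (/ 2)) (PVar (S (S n))))
       (PAdd (PMul (PAdd (PConst 2) (PMul (PConst (- c)) (PMul (PVar 0) (PVar 0)))) (PVar n)) r).

Section CentroAffine.

Variables (U : R -> R -> Prop) (X Y : R -> R -> R).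
Hypothesis HU : open2 U.
Hypothesis HX : Cinf U X.
Hypothesis HY : Cinf U Y.

Lemma Cinf_cross_C_Cp : Cinf U (cross_C_Cp X Y).
Proof. intros k. apply Ck_minus; auto; apply Ck_mult; auto; apply Cinf_dP; auto. Qed.

Lemma Cinf_cross_Cp_Cpp : Cinf U (cross_Cp_Cpp X Y).
Proof. intros k. apply Ck_minus; auto; apply Ck_mult; auto; repeat apply Cinf_dP; auto. Qed.

Lemma cont2_ca_ratio p t : U p t -> cross_C_Cp X Y p t <> 0 -> cont2 (ca_ratio X Y) p t.
Proof.
  intros Hu HC. apply cont2_mult; [| apply cont2_inv; [| exact HC]].
  - exact (Ck_cont U 0 _ p t (Cinf_cross_Cp_Cpp 0%nat) Hu).
  - exact (Ck_cont U 0 _ p t (Cinf_cross_C_Cp 0%nat) Hu).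
Qed.

Lemma open2_ca_ratio_pos : open2 (fun p t => U p t /\ 0 < ca_ratio X Y p t).
Proof.
  apply open2_and_pos; [exact HU |]. intros p t Hu Hpos. apply (cont2_ca_ratio p t Hu).
  intros Hzero. unfold ca_ratio in Hpos. rewrite Hzero, Rdiv_0_r in Hpos. lra.
Qed.

Hypothesis Hratio : forall p t, U p t -> 0 < ca_ratio X Y p t.

Lemma cross_C_Cp_neq0 p t : U p t -> cross_C_Cp X Y p t <> 0.
Proof. intros Hu Hzero. generalize (Hratio p t Hu). unfold ca_ratio. rewrite Hzero, Rdiv_0_r. lra. Qed.

Lemma ca_metric_pos p t : U p t -> 0 < ca_metric X Y p t.
Proof. intros Hu. apply sqrt_lt_R0, Hratio, Hu. Qed.

Lemma Cinf_ca_metric : Cinf U (ca_metric X Y).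
Proof.
  intros k. apply Ck_sqrt; [exact HU | exact Hratio |].
  apply Ck_div; [exact HU | exact cross_C_Cp_neq0 | apply Cinf_cross_Cp_Cpp | apply Cinf_cross_C_Cp].
Qed.

Lemma Cinf_dxi f : Cinf U f -> Cinf U (dxi X Y f).
Proof.
  intros Hf k. apply Ck_div; [exact HU | | apply Cinf_dP, Hf | apply Cinf_ca_metric].
  intros p t Hu. generalize (ca_metric_pos p t Hu). lra.
Qed.

Lemma Cinf_ca_curv : Cinf U (ca_curv X Y).
Proof.
  intros k. apply Ck_div; [exact HU | | |].
  - intros p t Hu. assert (Hg := ca_metric_pos p t Hu).
    replace (dxi X Y X p t * Y p t - dxi X Y Y p t * X p t)
      with (- cross_C_Cp X Y p t / ca_metric X Y p t)
      by (unfold dxi, cross_C_Cp; field; lra).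
    intros Hzero. apply (cross_C_Cp_neq0 p t Hu).
    apply (Rmult_eq_reg_r (/ ca_metric X Y p t)); [| apply Rinv_neq_0_compat; lra]. lra.
  - apply Ck_minus; auto; apply Ck_mult; auto; repeat apply Cinf_dxi; auto.
  - apply Ck_minus; auto; apply Ck_mult; auto; repeat apply Cinf_dxi; auto.
Qed.

Lemma Cinf_psi n : Cinf U (psi X Y n).
Proof. induction n as [| n IHn]; [exact Cinf_ca_curv | exact (Cinf_dxi _ IHn)]. Qed.

Lemma dP_eq_metric_dxi f p t : U p t -> dP f p t = ca_metric X Y p t * dxi X Y f p t.
Proof. intros Hu. assert (Hg := ca_metric_pos p t Hu). unfold dxi. field. lra. Qed.

Lemma is_derive_p_Cinf f p t : Cinf U f -> U p t ->
  is_derive (fun q => f q t) p (ca_metric X Y p t * dxi X Y f p t).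
Proof.
  intros Hf Hu. rewrite <- (dP_eq_metric_dxi f p t Hu).
  exact (Derive_correct _ _ (proj1 (proj2 (Cinf_pointwise U f p t Hf Hu)))).
Qed.

Lemma dT_dxi f p t : Cinf U f -> U p t ->
  dT (dxi X Y f) p t
  = dxi X Y (dT f) p t - dT (ca_metric X Y) p t / ca_metric X Y p t * dxi X Y f p t.
Proof.
  intros Hf Hu. assert (Hg := ca_metric_pos p t Hu).
  destruct (Cinf_pointwise U (dP f) p t (Cinf_dP _ _ Hf) Hu) as [_ [_ HfT]].
  destruct (Cinf_pointwise U (ca_metric X Y) p t Cinf_ca_metric Hu) as [_ [_ HgT]].
  change (dT (dxi X Y f) p t) with (Derive (fun s => dP f p s / ca_metric X Y p s) t).
  rewrite (Derive_div _ _ _ HfT HgT ltac:(lra)).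
  change (Derive (fun s : R_AbsRing => dP f p s) t) with (dT (dP f) p t).
  change (Derive (fun s : R_AbsRing => ca_metric X Y p s) t) with (dT (ca_metric X Y) p t).
  rewrite (Cinf_Schwarz U f p t HU Hf Hu).
  unfold dxi. field. lra.
Qed.

Lemma dxi2_nonpos_at_max f p t : Cinf U f -> (forall q, U q t) -> (forall q, f q t <= f p t) ->
  dxi X Y (dxi X Y f) p t <= 0.
Proof.
  intros Hf Hslice Hmax. assert (Hg := ca_metric_pos p t (Hslice p)).
  assert (Hdf : forall q, is_derive (fun q => f q t) q (ca_metric X Y q t * dxi X Y f q t))
    by (intros q; exact (is_derive_p_Cinf f q t Hf (Hslice q))).
  assert (Hd2 : is_derive (fun q => ca_metric X Y q t * dxi X Y f q t) p
    (ca_metric X Y p t * dxi X Y (ca_metric X Y) p t * dxi X Y f p t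
     + ca_metric X Y p t * (ca_metric X Y p t * dxi X Y (dxi X Y f) p t))).
  { apply (is_derive_Rmult (fun q => ca_metric X Y q t) (fun q => dxi X Y f q t)).
    - exact (is_derive_p_Cinf _ p t Cinf_ca_metric (Hslice p)).
    - exact (is_derive_p_Cinf _ p t (Cinf_dxi f Hf) (Hslice p)). }
  assert (Hcrit := deriv_at_max _ p _ (Hdf p) Hmax).
  assert (Hsecond := deriv2_at_max _ _ p _ Hdf Hd2 Hmax).
  assert (Hzero : dxi X Y f p t = 0) by nra.
  rewrite Hzero, Rmult_0_r, Rplus_0_l, <- Rmult_assoc in Hsecond.
  assert (Hg2 : 0 < ca_metric X Y p t * ca_metric X Y p t) by nra.
  nra.
Qed.

Variable T : R.
Hypothesis HUt : forall p t, 0 <= t < T -> U p t.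

Lemma bounded_above_by_max_principle (u : R -> R -> R) (M : R) :
  0 < T -> 0 <= M -> Cinf U u -> periodic u ->
  (forall p t, 0 <= t < T -> 0 <= u p t ->
     dT u p t <= / 2 * dxi X Y (dxi X Y u) p t + 2 * u p t + M) ->
  exists B, forall p t, 0 <= t < T -> u p t <= B.
Proof.
  intros HT HM Hu Hper Hevol. apply (periodic_max_principle T 2 M u HT ltac:(lra) HM Hper).
  - intros p t Ht. exact (Ck_cont U 0 u p t (Hu 0%nat) (HUt p t Ht)).
  - intros p t Ht. exact (proj2 (proj2 (Cinf_pointwise U u p t Hu (HUt p t ltac:(lra))))).
  - intros p t Ht Hmax Hpos.
    assert (Hxi2 := dxi2_nonpos_at_max u p t Hu (fun q => HUt q t ltac:(lra)) Hmax).
    generalize (Hevol p t ltac:(lra) Hpos). lra.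
Qed.

Hypothesis Hmetric : forall p t, 0 <= t < T ->
  dT (ca_metric X Y) p t / ca_metric X Y p t = / 2 * (ca_curv X Y p t) ^ 2.
Hypothesis Hcurv : forall p t, 0 <= t < T ->
  dT (ca_curv X Y) p t
  = / 2 * dxi X Y (dxi X Y (ca_curv X Y)) p t - / 2 * (ca_curv X Y p t) ^ 3 + 2 * ca_curv X Y p t.

Lemma dT_psi_S n E :
  (forall p t, 0 <= t < T -> dT (psi X Y n) p t = peval (psi X Y) E p t) ->
  forall p t, 0 <= t < T ->
  dT (psi X Y (S n)) p t
  = peval (psi X Y) (pderiv E) p t - / 2 * (psi X Y 0 p t) ^ 2 * psi X Y (S n) p t.
Proof.
  intros HE p t Ht. assert (Hg := ca_metric_pos p t (HUt p t Ht)).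
  change (psi X Y (S n)) with (dxi X Y (psi X Y n)).
  rewrite (dT_dxi _ p t (Cinf_psi n) (HUt p t Ht)), (Hmetric p t Ht).
  assert (Hslice : dP (dT (psi X Y n)) p t = ca_metric X Y p t * peval (psi X Y) (pderiv E) p t).
  { unfold dP. rewrite (Derive_ext _ (fun q => peval (psi X Y) E q t)) by (intros q; exact (HE q t Ht)).
    apply is_derive_unique, peval_is_derive.
    intros i. exact (is_derive_p_Cinf _ p t (Cinf_psi i) (HUt p t Ht)). }
  unfold dxi at 1. rewrite Hslice. change (psi X Y 0 p t) with (ca_curv X Y p t). field. lra.
Qed.

Lemma psi_evolution n : exists c r, 0 <= c /\ pvars_lt n r /\
  forall p t, 0 <= t < T -> dT (psi X Y n) p t = peval (psi X Y) (evolution_rhs c n r) p t.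
Proof.
  induction n as [| n [c [r [Hc [Hr Hevol]]]]].
  - exists (/ 2), (PConst 0). split; [lra | split; [exact I |]].
    intros p t Ht. change (psi X Y 0) with (ca_curv X Y). rewrite (Hcurv p t Ht).
    unfold evolution_rhs. cbn [peval]. change (psi X Y 2) with (dxi X Y (dxi X Y (ca_curv X Y))).
    change (psi X Y 0) with (ca_curv X Y). ring.
  - assert (Hstep := dT_psi_S n _ Hevol). destruct n as [| m].
    + exists (3 * c + / 2), (pderiv r). split; [lra | split; [exact (pvars_lt_pderiv _ _ Hr) |]].
      intros p t Ht. rewrite (Hstep p t Ht). unfold evolution_rhs. cbn [peval pderiv]. ring.
    + exists (c + / 2), (PAdd (PMul (PConst (- 2 * c)) (PMul (PMul (PVar 0) (PVar 1)) (PVar (S m))))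
                              (pderiv r)).
      split; [lra | split].
      * simpl. split; [repeat split; lia | exact (pvars_lt_pderiv _ _ Hr)].
      * intros p t Ht. rewrite (Hstep p t Ht). unfold evolution_rhs. cbn [peval pderiv]. ring.
Qed.

Lemma psi_bounded : 0 < T -> periodic X -> periodic Y ->
  forall n, exists M, forall p t, 0 <= t < T -> Rabs (psi X Y n p t) <= M.
Proof.
  intros HT HXper HYper n. induction n as [n IHn] using lt_wf_ind.
  destruct (psi_evolution n) as [c [r [Hc [Hr Hevol]]]].
  destruct (peval_bounded (psi X Y) (fun _ t => 0 <= t < T) n r IHn Hr) as [Mr HMr].
  assert (HM := Rmax_r Mr 0). assert (HMr' := Rmax_l Mr 0). set (M := Rmax Mr 0) in *.
  assert (Hrhs : forall p t, 0 <= t < T ->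
    dT (psi X Y n) p t = / 2 * dxi X Y (dxi X Y (psi X Y n)) p t
      + (2 - c * (psi X Y 0 p t * psi X Y 0 p t)) * psi X Y n p t + peval (psi X Y) r p t).
  { intros p t Ht. rewrite (Hevol p t Ht). unfold evolution_rhs. cbn [peval].
    change (psi X Y (S (S n))) with (dxi X Y (dxi X Y (psi X Y n))). ring. }
  destruct (bounded_above_by_max_principle (psi X Y n) M HT HM (Cinf_psi n) (periodic_psi X Y n HXper HYper))
    as [Bup HBup].
  { intros p t Ht Hpos. rewrite (Hrhs p t Ht).
    generalize (HMr p t Ht). intros Hbound. apply Rabs_le_between in Hbound.
    assert (0 <= c * (psi X Y 0 p t * psi X Y 0 p t) * psi X Y n p t)
      by (apply Rmult_le_pos; [apply Rmult_le_pos; nra | exact Hpos]).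
    lra. }
  destruct (bounded_above_by_max_principle (fun p t => - psi X Y n p t) M HT HM) as [Blow HBlow].
  { intros k. apply Ck_opp; [exact HU | apply Cinf_psi]. }
  { intros p t. cbv beta. now rewrite (periodic_psi X Y n HXper HYper). }
  { intros p t Ht Hpos. rewrite dxi_opp, dxi_opp. unfold dT. rewrite Derive_opp.
    change (- dT (psi X Y n) p t <= / 2 * - dxi X Y (dxi X Y (psi X Y n)) p t + 2 * - psi X Y n p t + M).
    rewrite (Hrhs p t Ht).
    generalize (HMr p t Ht). intros Hbound. apply Rabs_le_between in Hbound.
    assert (0 <= c * (psi X Y 0 p t * psi X Y 0 p t) * - psi X Y n p t)
      by (apply Rmult_le_pos; [apply Rmult_le_pos; nra | exact Hpos]).
    lra. }
  exists (Rmax Bup Blow). intros p t Ht. apply Rabs_le.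
  generalize (HBup p t Ht) (HBlow p t Ht) (Rmax_l Bup Blow) (Rmax_r Bup Blow). lra.
Qed.

End CentroAffine.

Lemma open2_slab (a b : R) : open2 (fun _ t => a < t < b).
Proof.
  intros p t Ht.
  assert (Hd : 0 < Rmin (t - a) (b - t)) by (apply Rmin_glb_lt; lra).
  exists (mkposreal _ Hd). intros u v _ Hv. simpl in Hv. apply Rabs_def2 in Hv.
  generalize (Rmin_l (t - a) (b - t)) (Rmin_r (t - a) (b - t)). lra.
Qed.

(* Connectedness of the half-strip, via the intermediate value theorem on the segment from the
   origin. *)
Lemma half_strip_pos (T : R) (f : R -> R -> R) :
  (forall p t, 0 <= t < T -> cont2 f p t) -> (forall p t, 0 <= t < T -> f p t <> 0) ->
  0 < f 0 0 -> forall p t, 0 <= t < T -> 0 < f p t.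
Proof.
  intros Hc Hnz H0 p t Ht. apply Rnot_le_lt. intros Hle.
  assert (Hneg : f p t < 0) by (destruct Hle; [assumption | contradiction (Hnz p t Ht)]).
  assert (Hseg : forall s, 0 <= s <= 1 -> 0 <= s * t < T) by (intros s Hs; split; nra).
  destruct (Ranalysis5.IVT_interv (fun s => - f (s * p) (s * t)) 0 1) as [z [Hz Hfz]].
  - intros s Hs. apply continuity_pt_opp, continuity_pt_filterlim.
    apply (continuous_comp_2 (fun s => s * p) (fun s => s * t) f).
    + apply (ex_derive_continuous (fun s => s * p)). auto_derive. auto.
    + apply (ex_derive_continuous (fun s => s * t)). auto_derive. auto.
    + exact (Hc _ _ (Hseg s Hs)).
  - lra.
  - rewrite !Rmult_0_l. lra.
  - rewrite !Rmult_1_l. lra.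
  - apply (Hnz (z * p) (z * t) (Hseg z Hz)). lra.
Qed.

Lemma half_strip_sign (T : R) (f : R -> R -> R) :
  (forall p t, 0 <= t < T -> cont2 f p t) -> (forall p t, 0 <= t < T -> f p t <> 0) -> 0 < T ->
  (forall p t, 0 <= t < T -> 0 < f p t) \/ (forall p t, 0 <= t < T -> f p t < 0).
Proof.
  intros Hc Hnz HT. destruct (Rlt_or_le 0 (f 0 0)) as [Hpos | Hle].
  - left. exact (half_strip_pos T f Hc Hnz Hpos).
  - right. intros p t Ht. enough (0 < - f p t) by lra.
    apply (half_strip_pos T (fun p t => - f p t)); [| | | exact Ht].
    + intros q s Hs. exact (continuous_opp (fun z : R * R => f (fst z) (snd z)) _ (Hc q s Hs)).
    + intros q s Hs. generalize (Hnz q s Hs). lra.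
    + destruct Hle as [Hlt | Heq]; [lra | contradiction (Hnz 0 0 ltac:(lra))].
Qed.

Theorem lemma3p3 (T lambda delta : R) (X Y : R -> R -> R) :
  0 < T ->
  0 < delta ->
  (* smooth family, smooth up to t = 0 (extended smoothly a bit below 0) *)
  smooth_on (fun _ t => - delta < t < T) X ->
  smooth_on (fun _ t => - delta < t < T) Y ->
  (* closed curves: parameter space S^1 = R / Z *)
  (forall p t, X (p + 1) t = X p t) ->
  (forall p t, Y (p + 1) t = Y p t) ->
  (* standing non-degeneracy assumptions *)
  (forall p t, 0 <= t < T -> cross_C_Cp X Y p t <> 0) ->
  (forall p t, 0 <= t < T -> cross_Cp_Cpp X Y p t <> 0) ->
  (* the flow  C_t = (lambda + int_0^xi phi dxi) C + (phi/2) C_xi *)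
  (forall p t, 0 <= t < T ->
     dT X p t = (lambda + int_curv X Y p t) * X p t
                + ca_curv X Y p t / 2 * dxi X Y X p t) ->
  (forall p t, 0 <= t < T ->
     dT Y p t = (lambda + int_curv X Y p t) * Y p t
                + ca_curv X Y p t / 2 * dxi X Y Y p t) ->
  (* consequences of the flow stated in the paper *)
  (forall p t, 0 <= t < T ->
     dT (ca_metric X Y) p t / ca_metric X Y p t = / 2 * (ca_curv X Y p t) ^ 2) ->
  (forall p t, 0 <= t < T ->
     dT (ca_curv X Y) p t =
       / 2 * dxi X Y (dxi X Y (ca_curv X Y)) p t
       - / 2 * (ca_curv X Y p t) ^ 3 + 2 * ca_curv X Y p t) ->
  forall n : nat, exists M : R, forall p t, 0 <= t < T ->
    Rabs (dxi_n X Y n (ca_curv X Y) p t) <= M.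
Proof.
  (* The flow equations for [X] and [Y] enter only through their consequences for [g] and [phi]. *)
  intros HT Hdelta HsX HsY HXper HYper HC HCp _ _ Hmetric Hcurv n.
  set (V := fun (_ : R) t => - delta < t < T).
  assert (HV : open2 V) by apply open2_slab.
  assert (HX := Cinf_of_smooth_on V X HsX). assert (HY := Cinf_of_smooth_on V Y HsY).
  assert (HVt : forall p t, 0 <= t < T -> V p t) by (intros p t Ht; unfold V; lra).
  change (exists M, forall p t, 0 <= t < T -> Rabs (psi X Y n p t) <= M).
  destruct (half_strip_sign T (ca_ratio X Y)) as [Hpos | Hneg]; [| | exact HT | |].
  - intros p t Ht. exact (cont2_ca_ratio V X Y HV HX HY p t (HVt p t Ht) (HC p t Ht)).
  - intros p t Ht. unfold ca_ratio, Rdiv.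
    apply Rmult_integral_contrapositive_currified; [| apply Rinv_neq_0_compat]; auto.
  - set (U := fun p t => V p t /\ 0 < ca_ratio X Y p t).
    assert (HUV : forall p t, U p t -> V p t) by (intros p t [Hv _]; exact Hv).
    apply (psi_bounded U X Y (open2_ca_ratio_pos V X Y HV HX HY)
             (fun k => Ck_subset U V k X HUV (HX k)) (fun k => Ck_subset U V k Y HUV (HY k))
             (fun p t Hu => proj2 Hu) T); auto.
    intros p t Ht. exact (conj (HVt p t Ht) (Hpos p t Ht)).
  - exists 0. intros p t Ht.
    rewrite psi_eq0_of_ratio_nonpos, Rabs_R0; [lra | left; exact (Hneg p t Ht)].
Qed.
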